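(* Let $m\ge 1$, $\alpha\in(0,1)$, and let $\mathbf{X}=(X_1,\dots,X_m)$ be a real random vector whose joint CDF $F_{\mathbf{X}}$ is continuous and strictly increasing, with continuous marginal CDFs $F_{X_1},\dots,F_{X_m}$ and copula $C_{\mathbf{X}}$, so that $F_{\mathbf{X}}(x_1,\dots,x_m)=C_{\mathbf{X}}(F_{X_1}(x_1),\dots,F_{X_m}(x_m))$. Let $q_{\max}$ be the value returned by the max-rank procedure, i.e. the smallest $q\in[0,1]$ such that $\mathbb{P}\big(\max_{1\le k\le m}\tilde R_k\le q\big)\ge 1-\alpha$, where $\tilde R_k=F_{X_k}(X_k)$ is the normalized rank of the $k$-th component. Then $q_{\max}$ solves the constrained problem $$\min q \quad\text{s.t.}\quad C_{\mathbf{X}}(q,\dots,q)\ge 1-\alpha,$$ i.e. $C_{\mathbf{X}}(q_{\max},\dots,q_{\max})\ge 1-\alpha$ and no smaller $q$ satisfies this constraint. Consequently the thresholds $x_{t,k}=F_{X_k}^{-1}(q_{\max})$, $k=1,\dots,m$, satisfy $\mathbb{P}(X_1\le x_{t,1},\dots,X_m\le x_{t,m})\ge 1-\alpha$ (family-wise error control at level $\alpha$), and among all thresholds with a common marginal quantile level they are optimal in the sense of maximal statistical power (decreasing the common level by any $\epsilon>0$ violates the error control).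
   Context: Setting: $m$ hypothesis tests are run in parallel; test $k$ has an empirical null distribution $\mathbf{s}_k=(s_{1,k},\dots,s_{n,k})$ of size $n$, collected in a matrix $\mathbf{S}\in\mathbb{R}^{n\times m}$, with column-wise rank matrix $\mathbf{R}=[r_{i,k}]$, where $r_{i,k}=|\{j\in[n]: s_{j,k}\le s_{i,k}\}|$ (ranks assumed distinct). The max-rank procedure: compute $\mathbf{r}_{\max}=(\max_k r_{1,k},\dots,\max_k r_{n,k})$, sort it ascending and take $r_{\max}$ as the entry at index $\lceil (n+1)(1-\alpha)\rceil$; then for each test $k$ use as corrected threshold (quantile) the $r_{\max}$-th smallest value of $\mathbf{s}_k$. Modeling each test statistic as a component $X_k$ of the random vector $\mathbf{X}$, normalized ranks $r/n$ correspond to values of the marginal CDF $F_{X_k}$, so the normalized selected rank $r_{\max}/n$ corresponds to the $(1-\alpha)$-quantile $q_{\max}$ of $\max_k F_{X_k}(X_k)$. A vector of thresholds $\mathbf{x}_t$ controls the family-wise error rate (probability of at least one false rejection) at level $\alpha$ iff $F_{\mathbf{X}}(\mathbf{x}_t)\ge 1-\alpha$; a smaller common quantile level means larger corrected significance levels and hence higher statistical power. *)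

From HB Require Import structures.
From mathcomp Require Import all_boot all_order all_algebra.
From mathcomp Require Import all_classical all_reals all_analysis.
Set Implicit Arguments. Unset Strict Implicit. Unset Printing Implicit Defensive.
Import Order.TTheory GRing.Theory Num.Theory.
Import numFieldNormedType.Exports.
Local Open Scope classical_set_scope.
Local Open Scope ring_scope.

Definition mcdf d (T : measurableType d) (R : realType) (P : probability T R)
  (X : {RV P >-> R}) (x : R) : R := fine (cdf X x).

Definition jcdf d (T : measurableType d) (R : realType) (P : probability T R)
  (m : nat) (X : 'I_m -> {RV P >-> R}) (x : 'rV[R]_m) : R :=
  fine (P [set t | forall k : 'I_m, X k t <= x ord0 k]).

Definition quantile (R : realType) (F : R -> R) (q : R) : R :=
  inf [set x | q <= F x].

Definition strictly_increasing_mv (R : realType) (m : nat) (F : 'rV[R]_m -> R) :=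
  forall x y : 'rV[R]_m, (forall k, x ord0 k <= y ord0 k) -> x != y -> F x < F y.

Definition in_unit_cube (R : realType) (m : nat) (u : 'rV[R]_m) :=
  forall k, 0 <= u ord0 k <= 1.

(* Standard definition of an m-dimensional copula C : [0,1]^m -> [0,1]
   (values outside [0,1]^m are irrelevant):
   grounded, uniform margins, and m-increasing (nonnegative C-volume of
   every box [a,b] in [0,1]^m). *)
Definition is_copula (R : realType) (m : nat) (C : 'rV[R]_m -> R) :=
  [/\ (forall u, in_unit_cube u -> 0 <= C u <= 1),
      (forall u, in_unit_cube u -> (exists k, u ord0 k = 0) -> C u = 0),
      (forall u k, in_unit_cube u -> (forall j, j != k -> u ord0 j = 1) ->
         C u = u ord0 k) &
      (forall a b : 'rV[R]_m, in_unit_cube a -> in_unit_cube b ->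
         (forall k, a ord0 k <= b ord0 k) ->
         0 <= \sum_(s : {ffun 'I_m -> bool})
                (-1) ^+ #|[set k | ~~ s k]| *
                C (\row_k (if s k then b ord0 k else a ord0 k)))].

Definition constv (R : realType) (m : nat) (q : R) : 'rV[R]_m := \row_(k < m) q.

Definition maxrank_prob d (T : measurableType d) (R : realType)
  (P : probability T R) (m : nat) (X : 'I_m -> {RV P >-> R}) (q : R) : \bar R :=
  P [set t | \big[Num.max/0]_(k < m) mcdf (X k) (X k t) <= q].

(* For 0 < q < 1 the marginal CDFs, continuous and strictly increasing (strict
   monotonicity is inherited from the joint CDF through Sklar's
   representation), are inverted by their quantile functions.  Hence the event
   max_k F_k(X_k) <= q is the box {X_k <= F_k^-1(q) for all k}, of probability
   C(q, ..., q), and on (0, 1) the max-rank constraint is the copula constraint.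
   The minimiser q_max lies in (0, 1): at q = 0 the max-rank event is empty,
   while at q = 1 - alpha / m Bonferroni's inequality gives probability at
   least 1 - m (1 - q) = 1 - alpha. *)

From HB Require Import structures.
From mathcomp Require Import all_boot all_order all_algebra.
From mathcomp Require Import all_classical all_reals all_analysis.
From mathcomp Require Import lra.

Set Implicit Arguments.
Unset Strict Implicit.
Unset Printing Implicit Defensive.
Import Order.TTheory GRing.Theory Num.Theory.
Import numFieldNormedType.Exports.
Local Open Scope classical_set_scope.
Local Open Scope ring_scope.

Section quantile_strictly_increasing.
Context {R : realType} (F : R -> R).
Hypothesis F_incr : {homo F : x y / x < y}.

Lemma quantile_cancel : cancel F (quantile F).
Proof.
move=> c; rewrite /quantile (_ : [set x | F c <= F x] = [set` `[c, +oo[]).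
  by rewrite inf_itv.
by apply/seteqP; split => x /=; rewrite (le_mono F_incr) in_itv /= andbT.
Qed.

Hypothesis F_cont : continuous F.

Lemma quantileK q : (exists a, F a < q) -> (exists b, q < F b) ->
  F (quantile F q) = q.
Proof.
move=> [a Faq] [b qFb].
have ab : a <= b by rewrite -(le_mono F_incr); exact/ltW/(lt_trans Faq).
have [c _ <-] : exists2 c, c \in `[a, b] & F c = q.
  apply: IVT => //; first exact: continuous_subspaceT.
  by rewrite ge_min (ltW Faq) le_max (ltW qFb) orbT.
by rewrite quantile_cancel.
Qed.

Lemma le_quantile q y : (exists a, F a < q) -> (exists b, q < F b) ->
  (F y <= q) = (y <= quantile F q).
Proof. by move=> Fq qF; rewrite -{1}(quantileK Fq qF) (le_mono F_incr). Qed.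

End quantile_strictly_increasing.

Section marginal_cdf.
Context d (T : measurableType d) (R : realType) (P : probability T R).
Variable X : {RV P >-> R}.

Lemma mcdfE x : cdf X x = (mcdf X x)%:E.
Proof. by rewrite /mcdf fineK // fin_num_measure. Qed.

Lemma mcdf_ge0 x : 0 <= mcdf X x.
Proof. by rewrite -lee_fin -mcdfE cdf_ge0. Qed.

Lemma mcdf_nondecreasing : nondecreasing_fun (mcdf X).
Proof. by move=> x y xy; rewrite -lee_fin -!mcdfE cdf_nondecreasing. Qed.

Lemma exists_mcdf_lt q : 0 < q -> exists a, mcdf X a < q.
Proof.
move=> q_gt0; have /fine_cvgP[_ cdfNy0] := cvg_cdfNy0 X.
have /filter_ex[a Faq] : \forall t \near -oo, mcdf X t < q.
  exact: cvgr_lt cdfNy0 _ q_gt0.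
by exists a.
Qed.

Lemma exists_mcdf_gt q : q < 1 -> exists b, q < mcdf X b.
Proof.
move=> q_lt1; have /fine_cvgP[_ cdfy1] := cvg_cdfy1 X.
have /filter_ex[b qFb] : \forall t \near +oo, q < mcdf X t.
  exact: cvgr_gt cdfy1 _ q_lt1.
by exists b.
Qed.

Lemma measurable_le_rv c : measurable [set t | X t <= c].
Proof.
by rewrite -[[set t | _]]/(X @^-1` `]-oo, c]); exact: measurable_funPTI.
Qed.

Lemma probability_le_rv c : P [set t | X t <= c] = (mcdf X c)%:E.
Proof. exact: mcdfE. Qed.

End marginal_cdf.

Section finite_families_of_events.
Context d (T : measurableType d) (R : realType).

Lemma measurable_exists (I : finType) (A : I -> set T) :
  (forall i, measurable (A i)) -> measurable [set t | exists i, A i t].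
Proof.
move=> mA; rewrite (_ : [set t | _] = \bigcup_(i in setT) A i).
  by apply: fin_bigcup_measurable => //; exact: finite_finset.
by apply/seteqP; split => t /= [i]; exists i.
Qed.

Lemma measurable_forall (I : finType) (A : I -> set T) :
  (forall i, measurable (A i)) -> measurable [set t | forall i, A i t].
Proof.
move=> mA; rewrite (_ : [set t | _] = \bigcap_(i in setT) A i).
  by apply: fin_bigcap_measurable => //; exact: finite_finset.
by apply/seteqP; split => t /= At i //; exact: At.
Qed.

Lemma le_measure_exists (mu : {measure set T -> \bar R}) m (A : 'I_m -> set T) :
  (forall k, measurable (A k)) ->
  (mu [set t | exists k, A k t] <= \sum_(k < m) mu (A k))%E.
Proof.
move=> mA; pose B n := if insub n is Some k then A k else set0.
have -> : \sum_(k < m) mu (A k) = \sum_(k < m) mu (B k).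
  by apply: eq_bigr => k _; rewrite /B -[nat_of_ord k]/(val k) valK.
apply: content_subadditive; first by move=> n _; rewrite /B; case: insub.
  exact: measurable_exists.
move=> t [k Akt]; rewrite -bigcup_mkord.
exists k; first exact: ltn_ord.
by rewrite /B -[nat_of_ord k]/(val k) valK.
Qed.

Lemma bonferroni_forall (P : probability T R) m (A : 'I_m -> set T) :
  (forall k, measurable (A k)) ->
  (1 - \sum_(k < m) P (~` A k) <= P [set t | forall k, A k t])%E.
Proof.
move=> mA; have mAC k : measurable (~` A k) by exact: measurableC.
rewrite -[X in P X]setCK probability_setC; last first.
  by apply: measurableC; exact: measurable_forall.
apply: leeB => //; rewrite (_ : ~` _ = [set t | exists k, (~` A k) t]).
  exact: le_measure_exists.
by apply/seteqP; split => t /=; [move/existsNP | move=> [k nAkt] /(_ k)].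
Qed.

End finite_families_of_events.

Lemma copula_constv0 (R : realType) (m : nat) (C : 'rV[R]_m -> R) :
  is_copula C -> (0 < m)%N -> C (constv m 0) = 0.
Proof.
case=> _ C_grounded _ _ m_gt0; apply: C_grounded => [k|].
  by rewrite mxE lexx ler01.
by exists (Ordinal m_gt0); rewrite mxE.
Qed.

Section max_rank.
Context d (T : measurableType d) (R : realType) (P : probability T R) (m : nat).
Variables (X : 'I_m -> {RV P >-> R}) (C : 'rV[R]_m -> R).
Hypothesis jcdf_incr : strictly_increasing_mv (jcdf X).
Hypothesis jcdf_sklar :
  forall x : 'rV[R]_m, jcdf X x = C (\row_k mcdf (X k) (x ord0 k)).

(* If F_k(a) = F_k(b), Sklar's representation gives equal joint CDFs at two
   points differing only in the k-th coordinate. *)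
Lemma mcdf_incr k : {homo mcdf (X k) : a b / a < b}.
Proof.
move=> a b ab; rewrite lt_neqAle mcdf_nondecreasing ?ltW // andbT.
apply/eqP => Fab; pose x c : 'rV[R]_m := \row_j (if j == k then c else 0).
have : jcdf X (x a) < jcdf X (x b).
  apply: jcdf_incr => [j|]; first by rewrite !mxE; case: eqP => // _; exact: ltW.
  by apply/eqP => /matrixP/(_ ord0 k); rewrite !mxE eqxx => /eqP; rewrite lt_eqF.
rewrite !jcdf_sklar (_ : \row_j _ = \row_j mcdf (X j) (x b ord0 j)) ?ltxx //.
by apply/matrixP => i j; rewrite !mxE; case: eqP => // ->.
Qed.

Lemma maxrank_prob0 : (0 < m)%N -> maxrank_prob X 0 = 0%E.
Proof.
move=> m_gt0; rewrite /maxrank_prob (_ : [set t | _] = set0) ?measure0 //.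
apply/seteqP; split => t //= /bigmax_leP[_ /(_ (Ordinal m_gt0) isT)].
set k := Ordinal m_gt0; apply/negP; rewrite -ltNge.
by apply: le_lt_trans (mcdf_ge0 _ (X k t - 1)) (mcdf_incr _ _); rewrite gtrBl.
Qed.

Hypothesis mcdf_cont : forall k, continuous (mcdf (X k)).

Lemma mcdf_quantile k q : 0 < q < 1 -> mcdf (X k) (quantile (mcdf (X k)) q) = q.
Proof.
case/andP => q_gt0 q_lt1; apply: quantileK; first exact: mcdf_incr.
- exact: mcdf_cont.
- exact: exists_mcdf_lt.
- exact: exists_mcdf_gt.
Qed.

Lemma mcdf_le_quantile k q y : 0 < q < 1 ->
  (mcdf (X k) y <= q) = (y <= quantile (mcdf (X k)) q).
Proof.
case/andP => q_gt0 q_lt1; apply: le_quantile; first exact: mcdf_incr.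
- exact: mcdf_cont.
- exact: exists_mcdf_lt.
- exact: exists_mcdf_gt.
Qed.

Definition below_quantiles q :=
  [set t | forall k, X k t <= quantile (mcdf (X k)) q].

Lemma probability_below_quantiles q : 0 < q < 1 ->
  P (below_quantiles q) = (C (constv m q))%:E.
Proof.
move=> q01.
have -> : C (constv m q) = jcdf X (\row_k quantile (mcdf (X k)) q).
  rewrite jcdf_sklar; congr C.
  by apply/matrixP => i j; rewrite !mxE mcdf_quantile.
rewrite /jcdf fineK; last first.
  by apply/fin_num_measure/measurable_forall => k; exact: measurable_le_rv.
by congr (P _); apply/seteqP; split => t /= + k => /(_ k); rewrite mxE.
Qed.

Lemma maxrank_probE q : 0 < q < 1 -> maxrank_prob X q = P (below_quantiles q).
Proof.
move=> q01; congr (P _); apply/seteqP; split => t /=.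
  by move/bigmax_leP => [_ le_q] k; rewrite -mcdf_le_quantile //; exact: le_q.
move=> le_Q; apply/bigmax_leP; split => [|k _]; first by case/andP: q01 => /ltW.
by rewrite mcdf_le_quantile.
Qed.

Lemma maxrank_prob_bonferroni q : 0 < q < 1 ->
  ((1 - (1 - q) *+ m)%:E <= maxrank_prob X q)%E.
Proof.
move=> q01; rewrite maxrank_probE //.
have P_exceed k : P (~` [set t | X k t <= quantile (mcdf (X k)) q]) = (1 - q)%:E.
  rewrite probability_setC ?probability_le_rv ?mcdf_quantile //.
  exact: measurable_le_rv.
apply: le_trans (bonferroni_forall _ (fun k => measurable_le_rv _ _)).
rewrite (eq_bigr _ (fun k _ => P_exceed k)) sumr_const card_ord.
by rewrite EFinB EFin_natmul.
Qed.

Lemma maxrank_prob_constv q : 0 < q < 1 ->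
  maxrank_prob X q = (C (constv m q))%:E.
Proof. by move=> q01; rewrite maxrank_probE // probability_below_quantiles. Qed.

Lemma maxrank_level_lt1 alpha : (0 < m)%N -> 0 < alpha < 1 ->
  exists2 q, 0 < q < 1 & ((1 - alpha)%:E <= maxrank_prob X q)%E.
Proof.
move=> m_gt0 /andP[alpha_gt0 alpha_lt1].
have m_pos : 0 < m%:R :> R by rewrite ltr0n.
have a_gt0 : 0 < alpha / m%:R by rewrite divr_gt0.
have a_lt1 : alpha / m%:R < 1.
  by rewrite ltr_pdivrMr // mul1r (lt_le_trans alpha_lt1) // ler1n.
have q01 : 0 < 1 - alpha / m%:R < 1 by rewrite subr_gt0 a_lt1 gtrBl a_gt0.
exists (1 - alpha / m%:R) => //; apply: le_trans (maxrank_prob_bonferroni q01).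
have -> : 1 - (1 - alpha / m%:R) = alpha / m%:R by lra.
by rewrite -mulr_natr divfK // gt_eqF.
Qed.

End max_rank.

Theorem proposition1 (d : measure_display) (T : measurableType d) (R : realType)
  (P : probability T R) (m : nat) (X : 'I_m -> {RV P >-> R})
  (C : 'rV[R]_m -> R) (alpha qmax : R) :
  (1 <= m)%N ->
  0 < alpha < 1 ->
  continuous (jcdf X) ->
  strictly_increasing_mv (jcdf X) ->
  (forall k, continuous (mcdf (X k))) ->
  is_copula C ->
  (forall x : 'rV[R]_m, jcdf X x = C (\row_k mcdf (X k) (x ord0 k))) ->
  (* qmax is the value returned by the max-rank procedure: the smallest
     q in [0,1] with P(max_k F_{X_k}(X_k) <= q) >= 1 - alpha *)
  0 <= qmax <= 1 ->
  ((1 - alpha)%:E <= maxrank_prob X qmax)%E ->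
  (forall q, 0 <= q <= 1 -> ((1 - alpha)%:E <= maxrank_prob X q)%E -> qmax <= q) ->
  [/\ 1 - alpha <= C (constv m qmax),
      (forall q, 0 <= q <= 1 -> q < qmax -> C (constv m q) < 1 - alpha),
      ((1 - alpha)%:E <=
         P [set t | forall k, (X k t <= quantile (mcdf (X k)) qmax)%R])%E &
      (forall eps, 0 < eps < qmax ->
         (P [set t | forall k, (X k t <= quantile (mcdf (X k)) (qmax - eps))%R]
           < (1 - alpha)%:E)%E)].
Proof.
move=> m_gt0 alpha01 _ jcdf_incr mcdf_cont C_copula jcdf_sklar
  /andP[qmax_ge0 qmax_le1] qmax_ok qmax_min.
have [alpha_gt0 alpha_lt1] := andP alpha01.
have probE := probability_below_quantiles jcdf_incr jcdf_sklar mcdf_cont.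
have maxrankE := maxrank_prob_constv jcdf_incr jcdf_sklar mcdf_cont.
have qmax_gt0 : 0 < qmax.
  rewrite lt_neqAle qmax_ge0 andbT; apply: contraTneq qmax_ok => <-.
  by rewrite (maxrank_prob0 jcdf_incr jcdf_sklar) // lee_fin subr_le0 -ltNge.
have qmax_lt1 : qmax < 1.
  have [q /andP[q_gt0 q_lt1] q_ok] :=
    maxrank_level_lt1 jcdf_incr jcdf_sklar mcdf_cont m_gt0 alpha01.
  apply: (le_lt_trans (qmax_min q _ q_ok) q_lt1).
  by rewrite (ltW q_gt0) (ltW q_lt1).
have C_lt q : 0 <= q -> q < qmax -> C (constv m q) < 1 - alpha.
  move=> q_ge0 q_lt; have [->|q_neq0] := eqVneq q 0.
    by rewrite copula_constv0 // subr_gt0.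
  have q_lt1 := lt_trans q_lt qmax_lt1.
  have q01 : 0 < q < 1 by rewrite lt_neqAle eq_sym q_neq0 q_ge0 q_lt1.
  rewrite ltNge -lee_fin -maxrankE //.
  by apply: contraTN q_lt => q_ok; rewrite -leNgt qmax_min // q_ge0 ltW.
have q01 : 0 < qmax < 1 by rewrite qmax_gt0.
split.
- by move: qmax_ok; rewrite maxrankE // lee_fin.
- by move=> q /andP[q_ge0 _]; exact: C_lt.
- by rewrite probE // -maxrankE.
- move=> eps /andP[eps_gt0 eps_lt].
  have q_lt : qmax - eps < qmax by rewrite gtrBl.
  rewrite probE ?lte_fin ?subr_gt0 ?eps_lt ?(lt_trans q_lt) //.
  by apply: C_lt q_lt; rewrite subr_ge0 ltW.
Qed.
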